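(* Let $\mathcal G$ be a $\sigma$-compact locally compact Hausdorff étale groupoid, $\ell$ a continuous, proper, controlled length function on $\mathcal G$, and $\rho$ the induced extended metric. Let $u\in\mathcal G^{(0)}$ and $R,\varepsilon>0$. Then there are $S\in[R,R+\varepsilon)$, an open neighborhood $V$ of $u$ in $\mathcal G^{(0)}$, an open set $W\subseteq\mathcal G$ and a homeomorphism $f:\bar B_\rho(u,S)\times V\to W$ such that: (1) $f(u,v)=v$ for all $v\in V$; (2) $f(x,u)=x$ for all $x\in\bar B_\rho(u,S)$; (3) $f(\bar B_\rho(u,S)\times\{v\})=\bar B_\rho(v,S)$ for all $v\in V$; (4) $|\rho(x,y)-\rho(f(x,v),f(y,v))|<\varepsilon$ for all $x,y\in\bar B_\rho(u,S)$ and $v\in V$.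
   Context: A length function is $\ell:\mathcal G\to[0,\infty)$ with $\ell(x)=0$ iff $x\in\mathcal G^{(0)}$, $\ell(x^{-1})=\ell(x)$, $\ell(xy)\le\ell(x)+\ell(y)$ for composable $x,y$. It is proper if every $K\subseteq\mathcal G\setminus\mathcal G^{(0)}$ with $\sup_K\ell<\infty$ is precompact, and controlled if $\sup_K\ell<\infty$ for every precompact $K$. The induced extended metric is $\rho(x,y)=\ell(xy^{-1})$ if $s(x)=s(y)$ and $\rho(x,y)=\infty$ otherwise. $\bar B_\rho(x,S)=\{y:\rho(x,y)\le S\}$ (a finite subset of the source fiber of $x$). *)

From HB Require Import structures.
From mathcomp Require Import all_boot all_order all_algebra.
From mathcomp Require Import all_classical all_reals all_analysis.
Set Implicit Arguments. Unset Strict Implicit. Unset Printing Implicit Defensive.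
Import Order.TTheory GRing.Theory Num.Theory.
Import numFieldNormedType.Exports.
Local Open Scope classical_set_scope.
Local Open Scope ring_scope.

(* A groupoid on a carrier G: unit space G0 (a subset of G), source s,
   range r, multiplication m (meaningful on composable pairs s x = r y,
   i.e. m x y = "x y"), inversion i. *)
Definition is_groupoid (G : Type) (G0 : set G) (s r : G -> G)
    (m : G -> G -> G) (i : G -> G) : Prop :=
  [/\ (forall x, G0 (s x) /\ G0 (r x)) /\
        (forall u, G0 u -> s u = u /\ r u = u),
      (forall x y, s x = r y -> s (m x y) = s y /\ r (m x y) = r x),
      (forall x y z, s x = r y -> s y = r z -> m (m x y) z = m x (m y z)),
      (forall x, m (r x) x = x /\ m x (s x) = x) &
      (forall x, [/\ s (i x) = r x, r (i x) = s x,
                     m x (i x) = r x & m (i x) x = s x])].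

Definition homeo_on (X Y : topologicalType) (A : set X) (B : set Y)
    (f : X -> Y) : Prop :=
  [/\ set_bij A B f, {within A, continuous f} &
      exists g : Y -> X, [/\ set_bij B A g,
        (forall x, A x -> g (f x) = x),
        (forall y, B y -> f (g y) = y) &
        {within B, continuous g}]].

Definition rel_open (X : topologicalType) (A V : set X) : Prop :=
  exists O, open O /\ V = O `&` A.

Definition is_topological_groupoid (G : topologicalType) (G0 : set G)
    (s r : G -> G) (m : G -> G -> G) (i : G -> G) : Prop :=
  [/\ is_groupoid G0 s r m i,
      {within [set p : G * G | s p.1 = r p.2], continuous (fun p => m p.1 p.2)}
      & continuous i].

Definition is_etale (G : topologicalType) (G0 : set G) (r : G -> G) : Prop :=
  forall x, exists U, [/\ open U, U x, rel_open G0 (r @` U) & homeo_on U (r @` U) r].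

Definition sigma_compact (X : topologicalType) : Prop :=
  exists K : nat -> set X, (forall n, compact (K n)) /\ \bigcup_n K n = setT.

Definition is_length_function (R : realType) (G : Type) (G0 : set G)
    (s r : G -> G) (m : G -> G -> G) (i : G -> G) (l : G -> R) : Prop :=
  [/\ (forall x, 0 <= l x),
      (forall x, l x = 0 <-> G0 x),
      (forall x, l (i x) = l x) &
      (forall x y, s x = r y -> l (m x y) <= l x + l y)].

Definition length_proper (R : realType) (G : topologicalType) (G0 : set G)
    (l : G -> R) : Prop :=
  forall K : set G, K `<=` ~` G0 ->
    (exists M : R, forall x, K x -> l x <= M) -> precompact K.

Definition length_controlled (R : realType) (G : topologicalType)
    (l : G -> R) : Prop :=
  forall K : set G, precompact K -> exists M : R, forall x, K x -> l x <= M.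

Definition rho (R : realType) (G : Type) (s : G -> G) (m : G -> G -> G)
    (i : G -> G) (l : G -> R) (x y : G) : \bar R :=
  if asbool (s x = s y) then (l (m x (i y)))%:E else +oo%E.

Definition cball_rho (R : realType) (G : Type) (s : G -> G) (m : G -> G -> G)
    (i : G -> G) (l : G -> R) (x : G) (S : R) : set G :=
  [set y | (rho s m i l x y <= S%:E)%E].

From HB Require Import structures.
From mathcomp Require Import all_boot all_order all_algebra.
From mathcomp Require Import all_classical all_reals all_analysis.
From mathcomp Require Import lra.
Import Order.TTheory GRing.Theory Num.Theory.
Import numFieldNormedType.Exports.
Local Open Scope classical_set_scope.
Local Open Scope ring_scope.
Set Implicit Arguments. Unset Strict Implicit.

(* Since G is étale, every arrow x has an open set U x around x^-1 on which
   the range map is a homeomorphism onto a relatively open set D x of units;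
   inverting it gives a continuous local section lsec x of the source map,
   defined on D x, with lsec x (s x) = x.  Source fibres are therefore
   discrete, and as l is proper, balls of the source fibre over a unit u are
   compact and discrete, hence finite.  We choose S in [Rad, Rad + eps) that is
   not a value of l on the fibre over u, so that l < S on the ball B.

   The homeomorphism is f (x, v) = lsec x v.  For units v near u, finitely
   many open conditions hold at once ([adapted]): v lies in every D x (x in B),
   the sections stay in the ball, distances l (x y^-1) move by less than eps
   (and by less than their own size, which keeps the sections apart), and
   every arrow of the ball around v lies on one of the sections; the last
   condition is a compactness argument using properness of l. *)

Lemma nbhs_open (X : topologicalType) (x : X) (A : set X) :
  nbhs x A -> exists N, [/\ open N, N x & N `<=` A].
Proof. by rewrite nbhsE => -[N [oN Nx] NA]; exists N. Qed.

Lemma open_preimage (X Y : topologicalType) (f : X -> Y) (Q : set Y) :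
  continuous f -> open Q -> open (f @^-1` Q).
Proof. by move=> /continuousP; apply. Qed.

Definition open_continuous_on (X Y : topologicalType) (A : set X) (f : X -> Y) :=
  forall x, A x -> forall Q, open Q -> Q (f x) ->
    exists N, [/\ open N, N x & forall y, N y -> A y -> Q (f y)].

Lemma within_continuousP (X Y : topologicalType) (A : set X) (f : X -> Y) :
  {within A, continuous f} <-> open_continuous_on A f.
Proof.
rewrite subspace_continuousP; split.
  move=> fc x Ax Q oQ Qfx.
  have : (f @ within A (nbhs x)) Q by apply: (fc x Ax); exact: open_nbhs_nbhs.
  move=> /nbhs_open [N [oN Nx NQ]].
  by exists N; split => // y Ny Ay; apply: NQ.
move=> fc x Ax P /nbhs_open [Q [oQ Qfx QP]].
have [N [oN Nx NQ]] := fc x Ax Q oQ Qfx.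
apply: filterS (open_nbhs_nbhs (conj oN Nx)) => y Ny Ay.
by apply: QP; exact: NQ.
Qed.

Lemma open_prod_box (X Y : topologicalType) (N : set (X * Y)) (a : X) (b : Y) :
  open N -> N (a, b) -> exists N1 N2, [/\ open N1, open N2, N1 a, N2 b &
     forall a' b', N1 a' -> N2 b' -> N (a', b')].
Proof.
move=> oN Nab; have [[Q1 Q2] [/= Q1a Q2b] QN] := open_nbhs_nbhs (conj oN Nab).
have [N1 [oN1 N1a N1Q]] := nbhs_open Q1a; have [N2 [oN2 N2b N2Q]] := nbhs_open Q2b.
by exists N1, N2; split => // a' b' /N1Q ? /N2Q ?; exact: (QN (a', b')).
Qed.

Lemma open_setX (X Y : topologicalType) (A : set X) (B : set Y) :
  open A -> open B -> open (A `*` B).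
Proof.
move=> oA oB; rewrite openE => p [Ap Bp].
by exists (A, B) => //; split; apply: open_nbhs_nbhs.
Qed.

(* A compact set all of whose points are isolated is finite: otherwise the
   filter of cofinite subsets of A would cluster at some point of A, which is
   impossible at an isolated point. *)
Lemma compact_discrete_finite (T : topologicalType) (A : set T) :
  compact A ->
  (forall y, A y -> exists N, [/\ open N, N y & forall z, A z -> N z -> z = y]) ->
  finite_set A.
Proof.
move=> cA isolated; apply: contrapT => infA.
pose F := [set P : set T | finite_set (A `\` P)].
have FF : ProperFilter F.
  apply: Build_ProperFilter; first by rewrite /F /= setD0.
  constructor.
  - by rewrite /F /= setDT; exact: finite_set0.
  - by move=> P Q FP FQ; rewrite /F /= setDIr finite_setU.
  - move=> P Q PQ; apply: sub_finite_set => x [Ax nQx].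
    by split => // Px; apply/nQx/PQ.
have FA : F A by rewrite /F /= setDv; exact: finite_set0.
have [z [Az clz]] := cA F FF FA.
have [N [oN Nz NA]] := isolated z Az.
have FAz : F (A `\` [set z]).
  rewrite /F /=; apply: sub_finite_set (finite_set1 z) => x [Ax nx].
  by apply: contrapT => nxz; apply: nx; split.
have [y [[Ay nyz] Ny]] := clz _ _ FAz (open_nbhs_nbhs (conj oN Nz)).
by apply: nyz; apply: NA.
Qed.

(* "P holds at every point of G0 close enough to u": the neighbourhood V of
   the theorem is obtained by intersecting finitely many such conditions. *)
Definition near_in (T : topologicalType) (G0 : set T) (u : T) (P : T -> Prop) :=
  exists N, [/\ open N, N u & forall v, N v -> G0 v -> P v].

Lemma near_in_and (T : topologicalType) (G0 : set T) (u : T) (P Q : T -> Prop) :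
  near_in G0 u P -> near_in G0 u Q -> near_in G0 u (fun v => P v /\ Q v).
Proof.
move=> [N1 [oN1 N1u h1]] [N2 [oN2 N2u h2]]; exists (N1 `&` N2).
by split => //; [exact: openI | move=> v [? ?] ?; split; [apply: h1 | apply: h2]].
Qed.

Lemma near_in_finite (T : topologicalType) (G0 : set T) (u : T) (I : eqType)
    (A : set I) (P : I -> T -> Prop) :
  finite_set A -> (forall a, A a -> near_in G0 u (P a)) ->
  near_in G0 u (fun v => forall a, A a -> P a v).
Proof.
move=> /finite_seqP [sq ->]; elim: sq => [|a sq IH] nearA.
  by exists setT; split => //; exact: openT.
have [|N [oN Nu hN]] := IH.
  by move=> b /= bs; apply: nearA; rewrite /= inE bs orbT.
have [|N' [oN' N'u hN']] := nearA a; first by rewrite /= inE eqxx.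
exists (N `&` N'); split => //; first exact: openI.
by move=> v [Nv N'v] Gv b /=; rewrite inE => /orP [/eqP -> | bs];
  [exact: hN' | exact: hN].
Qed.

Section GroupoidAlgebra.
Context {R : realType} {G : Type} {G0 : set G} {s r : G -> G}
  {m : G -> G -> G} {i : G -> G} {l : G -> R}.
Hypothesis HG : is_groupoid G0 s r m i.
Hypothesis Hl : is_length_function G0 s r m i l.

Lemma sG0 x : G0 (s x). Proof. by case: HG => [[H _] _ _ _ _]; case: (H x). Qed.
Lemma rG0 x : G0 (r x). Proof. by case: HG => [[H _] _ _ _ _]; case: (H x). Qed.
Lemma unit_s v : G0 v -> s v = v. Proof. by case: HG => [[_ H] _ _ _ _] /H []. Qed.
Lemma unit_r v : G0 v -> r v = v. Proof. by case: HG => [[_ H] _ _ _ _] /H []. Qed.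
Lemma smul x y : s x = r y -> s (m x y) = s y.
Proof. by case: HG => [_ H _ _ _] /H []. Qed.
Lemma rmul x y : s x = r y -> r (m x y) = r x.
Proof. by case: HG => [_ H _ _ _] /H []. Qed.
Lemma massoc x y z : s x = r y -> s y = r z -> m (m x y) z = m x (m y z).
Proof. by case: HG => [_ _ H _ _]; apply: H. Qed.
Lemma mrl x : m (r x) x = x. Proof. by case: HG => [_ _ _ H _]; case: (H x). Qed.
Lemma msr x : m x (s x) = x. Proof. by case: HG => [_ _ _ H _]; case: (H x). Qed.
Lemma si x : s (i x) = r x. Proof. by case: HG => [_ _ _ _ H]; case: (H x). Qed.
Lemma ri x : r (i x) = s x. Proof. by case: HG => [_ _ _ _ H]; case: (H x). Qed.
Lemma mi x : m x (i x) = r x. Proof. by case: HG => [_ _ _ _ H]; case: (H x). Qed.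
Lemma im x : m (i x) x = s x. Proof. by case: HG => [_ _ _ _ H]; case: (H x). Qed.

Lemma ii x : i (i x) = x.
Proof.
have h1 : x = m (m (i (i x)) (i x)) x by rewrite im si mrl.
have h2 : s (i (i x)) = s x by rewrite si ri.
by rewrite [RHS]h1 massoc ?si // im -h2 msr.
Qed.

Lemma unit_i v : G0 v -> i v = v.
Proof.
move=> Gv; have rv : r (i v) = v by rewrite ri unit_s.
have h : m v (i v) = v by rewrite mi unit_r.
by rewrite -{1}rv mrl in h.
Qed.

Lemma mi_unit_eq x y : s x = s y -> G0 (m x (i y)) -> x = y.
Proof.
move=> e Gw; have c1 : s x = r (i y) by rewrite ri.
have c2 : s (i y) = r y by rewrite si.
have sw := unit_s Gw; have rw := unit_r Gw.
rewrite smul // si in sw; rewrite rmul // in rw.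
have h : m (m x (i y)) y = x by rewrite massoc // im -e msr.
by rewrite -[in LHS]h -sw mrl.
Qed.

Lemma l_ge0 x : 0 <= l x. Proof. by case: Hl. Qed.
Lemma l_unit v : G0 v -> l v = 0. Proof. by case: Hl => _ H _ _ /H. Qed.
Lemma l_eq0 x : l x = 0 -> G0 x. Proof. by case: Hl => _ H _ _ /H. Qed.
Lemma l_i x : l (i x) = l x. Proof. by case: Hl. Qed.
Lemma l_mi x : l (m x (i x)) = 0. Proof. by rewrite mi l_unit //; exact: rG0. Qed.

Lemma rho_same x y : s x = s y -> rho s m i l x y = (l (m x (i y)))%:E.
Proof. by move=> e; rewrite /rho asboolT. Qed.

Lemma rho_unit v y : G0 v -> s y = v -> rho s m i l v y = (l y)%:E.
Proof.
move=> Gv e; rewrite rho_same; last by rewrite unit_s // e.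
have e2 : v = r (i y) by rewrite ri.
by rewrite {1}e2 mrl l_i.
Qed.

Lemma cball_unit v (T : R) y : G0 v ->
  cball_rho s m i l v T y <-> s y = v /\ l y <= T.
Proof.
move=> Gv; rewrite /cball_rho /=; split; last first.
  by move=> [e h]; rewrite rho_unit // lee_fin.
case: (pselect (s y = v)) => e; first by rewrite rho_unit // lee_fin.
by rewrite /rho asboolF // unit_s // => e'; apply: e.
Qed.
End GroupoidAlgebra.

(* In [a, b) there is a point avoiding any given finite set of reals: the
   points a + (b - a) / (k + 2) are pairwise distinct. *)
Lemma avoid_finite (R : realType) (A : set R) (a b : R) :
  finite_set A -> a < b -> exists2 S, a <= S < b & ~ A S.
Proof.
move=> finA ab; have ba : 0 < b - a by rewrite subr_gt0.
pose f (k : nat) : R := a + (b - a) / (k.+2)%:R.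
have finj : injective f.
  move=> k k'; rewrite /f => /addrI /(mulfI (lt0r_neq0 ba)) /invr_inj.
  by move/eqP; rewrite eqr_nat => /eqP [].
have [k nAk] : exists k, ~ A (f k).
  apply: contrapT => allA; apply: infinite_nat.
  have <- : f @^-1` A = setT.
    by apply/seteqP; split => // k _; apply: contrapT => nAk; apply: allA; exists k.
  by apply: finite_preimage => // k k' _ _; apply: finj.
have pos : 0 < (b - a) / (k.+2)%:R by apply: divr_gt0.
exists (f k) => //; apply/andP; split; first by rewrite /f lerDl ltW.
rewrite /f -ltrBrDl ltr_pdivrMr ?ltr0n // ltr_pMr // ltr1n //.
Qed.

Section LocalProductStructure.
Variables (R : realType) (G : topologicalType) (G0 : set G) (s r : G -> G)
  (m : G -> G -> G) (i : G -> G) (l : G -> R).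
Hypothesis HG : is_groupoid G0 s r m i.
Hypothesis Hi : continuous i.

Variables (U : G -> set G) (g : G -> G -> G).
Hypothesis U_open : forall x, open (U x).
Hypothesis U_inv : forall x, U x (i x).
Hypothesis g_sect : forall x v, (r @` U x) v -> U x (g x v) /\ r (g x v) = v.
Hypothesis g_retr : forall x y, U x y -> g x (r y) = y.
Hypothesis g_cont : forall x, {within r @` U x, continuous g x}.
Hypothesis D_open : forall x, exists2 Q, open Q & r @` U x = Q `&` G0.

Local Notation D x := (r @` U x).

Definition lsec x v := i (g x v).

Lemma D_s x : D x (s x).
Proof. by exists (i x) => //; rewrite (ri HG). Qed.

Lemma lsec_s x v : D x v -> s (lsec x v) = v.
Proof. by move=> /g_sect [_ e]; rewrite /lsec (si HG). Qed.

Lemma lsec_U x v : D x v -> U x (i (lsec x v)).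
Proof. by move=> /g_sect [h _]; rewrite /lsec (ii HG). Qed.

Lemma lsec_onto x y : U x (i y) -> D x (s y) /\ lsec x (s y) = y.
Proof.
move=> Uy; split; first by exists (i y) => //; rewrite (ri HG).
by rewrite /lsec -(ri HG) g_retr // (ii HG).
Qed.

Lemma lsec_at x : lsec x (s x) = x.
Proof. by case: (lsec_onto (U_inv x)). Qed.

Lemma lsec_cont x : open_continuous_on (D x) (lsec x).
Proof.
move=> v Dv Q oQ Qv; have oQ' := open_preimage Hi oQ.
have /within_continuousP gc := @g_cont x.
have [N [oN Nv NQ]] := gc v Dv _ oQ' Qv.
by exists N; split => // w Nw Dw; apply: NQ.
Qed.

Lemma fibre_discrete x y : s x = s y -> U x (i y) -> y = x.
Proof. by move=> e /lsec_onto [_ h]; rewrite -h -e lsec_at. Qed.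

Hypothesis Hs : continuous s.
Hypothesis Hhaus : hausdorff_space G.
Hypothesis Hl : is_length_function G0 s r m i l.
Hypothesis Hlc : continuous l.
Hypothesis Hprop : length_proper G0 l.

Lemma bounded_nonunits_compact (T : R) :
  compact (closure [set y | ~ G0 y /\ l y <= T]).
Proof.
rewrite -precompactE; apply: Hprop; first by move=> y [].
by exists T => y [].
Qed.

(* Balls of the source fibre over a unit u are finite: they are closed,
   contained in a compact set, and discrete. *)
Lemma fibre_ball_finite (u : G) (T : R) :
  finite_set [set y | s y = u /\ l y <= T].
Proof.
set A := [set y | s y = u /\ l y <= T].
have clA : closed A.
  have -> : A = s @^-1` [set u] `&` l @^-1` [set t | t <= T] by [].
  apply: closedI; apply: (proj1 (continuous_closedP _)) => //.
  exact: accessible_closed_set1 (hausdorff_accessible Hhaus) u.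
apply: compact_discrete_finite.
  apply: (subclosed_compact clA).
    by apply: compactU; [exact: bounded_nonunits_compact | exact: compact_set1].
  move=> y [sy ly]; case: (pselect (G0 y)) => Gy.
    by right; rewrite /= -sy (unit_s HG Gy).
  by left; apply: subset_closure.
move=> y [sy ly]; exists (i @^-1` U y); split => //.
  exact: open_preimage.
by move=> z [sz lz] Uz; apply: fibre_discrete => //; rewrite sy sz.
Qed.

Lemma good_radius (u : G) (Rad eps : R) : 0 < eps ->
  exists S, Rad <= S < Rad + eps /\ forall y, s y = u -> l y != S.
Proof.
move=> eps0.
have finL := finite_image l (fibre_ball_finite u (Rad + eps)).
have [|S /andP [RS SR] nS] := avoid_finite (a := Rad) (b := Rad + eps) finL; first by rewrite ltrDl.
exists S; split; first by rewrite RS SR.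
move=> y sy; apply/eqP => lyS; apply: nS; exists y => //.
by split => //; rewrite lyS ltW.
Qed.

Hypothesis Hm :
  {within [set p : G * G | s p.1 = r p.2], continuous (fun p => m p.1 p.2)}.
Variables (u : G) (eps S : R).
Hypothesis Hu : G0 u.
Hypothesis eps_gt0 : 0 < eps.
Hypothesis S_ge0 : 0 <= S.
Hypothesis S_avoids : forall y, s y = u -> l y != S.

Local Notation B := (cball_rho s m i l u S).

Lemma B_iff y : B y <-> s y = u /\ l y <= S.
Proof. exact: (cball_unit HG Hl _ _ Hu). Qed.

Lemma B_s x : B x -> s x = u. Proof. by case/B_iff. Qed.

Lemma B_u : B u.
Proof. by apply/B_iff; rewrite (unit_s HG Hu) (l_unit Hl Hu). Qed.

Lemma B_finite : finite_set B.
Proof. by apply: sub_finite_set (fibre_ball_finite u S) => y /B_iff. Qed.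

(* Since S is not a value of l on the fibre, l < S holds strictly on B. *)
Lemma B_lt y : B y -> l y < S.
Proof. by move=> /B_iff [sy ly]; rewrite lt_neqAle ly andbT S_avoids. Qed.

Lemma B_D x : B x -> D x u.
Proof. by move=> Bx; rewrite -(B_s Bx); exact: D_s. Qed.

Lemma lsec_B x : B x -> lsec x u = x.
Proof. by move=> Bx; rewrite -(B_s Bx) lsec_at. Qed.

Lemma near_D x : B x -> near_in G0 u (D x).
Proof.
move=> Bx; have [Q oQ DQ] := D_open x.
exists Q; split => //; first by have := B_D Bx; rewrite DQ => -[].
by move=> v Qv Gv; rewrite DQ.
Qed.

(* Near u, v lies in U u, which gives f (u, v) = v. *)
Lemma near_U : near_in G0 u (U u).
Proof. by exists (U u); split => //; have := U_inv u; rewrite (unit_i HG Hu). Qed.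

(* The section stays inside the ball, because l < S at its base point. *)
Lemma near_len x : B x -> near_in G0 u (fun v => D x v -> l (lsec x v) <= S).
Proof.
move=> Bx; have oP : open (l @^-1` [set t | t < S]).
  by apply: open_preimage => //; exact: open_lt.
have lx : (l @^-1` [set t | t < S]) (lsec x u) by rewrite /= lsec_B //; exact: B_lt.
have [N [oN Nu NP]] := lsec_cont (B_D Bx) oP lx.
by exists N; split => // v Nv Gv Dv; apply/ltW/NP.
Qed.

(* Distances between the sections through x and y move by less than eps, and
   by less than their size when x != y, which keeps the sections apart. *)
Definition dist_stable x y v :=
  D x v -> D y v ->
  `|l (m x (i y)) - l (m (lsec x v) (i (lsec y v)))| <
    (if x == y then eps else Num.min eps (l (m x (i y)))).

Lemma near_dist x y : B x -> B y -> near_in G0 u (dist_stable x y).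
Proof.
move=> Bx By; rewrite /dist_stable; case: eqP => [<-|nxy].
  exists setT; split => //; first exact: openT.
  by move=> v _ _ _ _; rewrite !(l_mi HG Hl) subrr normr0.
set c := l (m x (i y)); set tol := Num.min eps c.
have c_gt0 : 0 < c.
  rewrite lt_neqAle (l_ge0 Hl) andbT; apply/eqP => c0; apply: nxy.
  apply: (mi_unit_eq HG); first by rewrite !B_s.
  exact: (l_eq0 Hl) (esym c0).
have tol_gt0 : 0 < tol by rewrite lt_min eps_gt0 c_gt0.
set P := [set t : R | c - tol < t /\ t < c + tol].
have oP : open P.
  have -> : P = [set t | c - tol < t] `&` [set t | t < c + tol] by [].
  by apply: openI; [exact: open_gt | exact: open_lt].
have Pc : (l @^-1` P) (m x (i y)).
  by rewrite /= -/c; split; [rewrite ltrBlDr ltrDl | rewrite ltrDl].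
have comp : s x = r (i y) by rewrite (ri HG) !B_s.
have /within_continuousP mc := Hm.
have [N [oN Nxy NP]] := mc (x, i y) comp _ (open_preimage Hlc oP) Pc.
have [N1 [N2 [oN1 oN2 N1x N2y N12]]] := open_prod_box oN Nxy.
have [Nx [oNx Nxu NxP]] := lsec_cont (B_D Bx) oN1 (eq_ind_r N1 N1x (lsec_B Bx)).
have N2y' : (i @^-1` N2) (lsec y u) by rewrite /= lsec_B.
have [Ny [oNy Nyu NyP]] := lsec_cont (B_D By) (open_preimage Hi oN2) N2y'.
exists (Nx `&` Ny); split => //; first exact: openI.
move=> v [nx ny] Gv Dx Dy.
have : (l @^-1` P) (m (lsec x v) (i (lsec y v))).
  apply: (NP (lsec x v, i (lsec y v))); first by apply: N12; [apply: NxP | apply: NyP].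
  by rewrite /= (ri HG) !lsec_s.
by rewrite /= -/c => -[h1 h2]; rewrite ltr_norml; apply/andP; split; lra.
Qed.

Definition covered v := forall y, s y = v -> l y <= S -> ~ G0 y ->
  exists x, B x /\ U x (i y).

Definition escaping y := [/\ l y <= S, ~ G0 y & forall x, B x -> ~ U x (i y)].

Section EscapingArrows.
(* Towards a contradiction: escaping arrows have sources arbitrarily near u. *)
Hypothesis escape : forall N, open N -> N u -> exists y, escaping y /\ N (s y).

Definition escape_filter := [set P : set G | exists N,
  [/\ open N, N u & forall y, escaping y -> N (s y) -> P y]].

Lemma escape_filter_proper : ProperFilter escape_filter.
Proof.
apply: Build_ProperFilter.
  by move=> [N [oN Nu H]]; have [y [ey Ny]] := escape oN Nu; exact: H y ey Ny.
constructor.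
- by exists setT; split => //; exact: openT.
- move=> P1 P2 [N1 [oN1 N1u H1]] [N2 [oN2 N2u H2]].
  exists (N1 `&` N2); split => //; first exact: openI.
  by move=> y ey [n1 n2]; split; [apply: H1 | apply: H2].
- move=> P1 P2 P12 [N [oN Nu H]]; exists N; split => // y ey Ny.
  by apply/P12/H.
Qed.

Lemma escaping_eventually : escape_filter escaping.
Proof. by exists setT; split => //; exact: openT. Qed.

Lemma escape_cluster : exists z, cluster escape_filter z.
Proof.
have FC : escape_filter (closure [set y | ~ G0 y /\ l y <= S]).
  exists setT; split => //; first exact: openT.
  by move=> y [ly ny _] _; apply: subset_closure.
have [z [_ clz]] := bounded_nonunits_compact escape_filter_proper FC.
by exists z.
Qed.

Lemma escape_cluster_source z : cluster escape_filter z -> s z = u.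
Proof.
move=> clz; apply: contrapT => /eqP nz.
move: Hhaus; rewrite open_hausdorff => /(_ _ _ nz) [[A1 A2] /= [A1s A2u]].
move=> [oA1 oA2 /eqP A12].
have FA2 : escape_filter [set y | A2 (s y)].
  by exists A2; split => //; move: A2u; rewrite inE.
have nA1 : nbhs z (s @^-1` A1).
  apply: open_nbhs_nbhs; split; first exact: open_preimage.
  by move: A1s; rewrite inE.
have [y [y2 y1]] := clz _ _ FA2 nA1.
by have : (A1 `&` A2) (s y) by []; rewrite A12.
Qed.

Lemma escape_cluster_length z : cluster escape_filter z -> l z <= S.
Proof.
move=> clz; case: (leP (l z) S) => // Slz.
have nZ : nbhs z (l @^-1` [set t | S < t]).
  by apply: open_nbhs_nbhs; split => //; apply: open_preimage => //; exact: open_gt.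
have [y [[ly _] Sy]] := clz _ _ escaping_eventually nZ.
by move: Sy; rewrite /= ltNge ly.
Qed.

(* The cluster point z lies in B, so U z^-1 is a neighbourhood of z that no
   escaping arrow can enter. *)
Lemma no_escape : False.
Proof.
have [z clz] := escape_cluster.
have Bz : B z by apply/B_iff; split; [exact: escape_cluster_source |
  exact: escape_cluster_length].
have nZ : nbhs z (i @^-1` U z).
  by apply: open_nbhs_nbhs; split; [exact: open_preimage | exact: U_inv].
have [y [[_ _ ny] Uy]] := clz _ _ escaping_eventually nZ.
exact: ny z Bz Uy.
Qed.
End EscapingArrows.

Lemma near_covered : near_in G0 u covered.
Proof.
apply: contrapT => not_near; apply: no_escape => N oN Nu.
apply: contrapT => no_esc; apply: not_near; exists N; split => //.
move=> v Nv Gv y sy ly ny; apply: contrapT => nex; apply: no_esc; exists y.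
split; last by rewrite sy.
by split => // x Bx Ux; apply: nex; exists x.
Qed.

Definition adapted v := [/\ U u v, forall x, B x -> D x v,
  forall x, B x -> D x v -> l (lsec x v) <= S,
  forall x y, B x -> B y -> dist_stable x y v & covered v].

Lemma near_adapted : near_in G0 u adapted.
Proof.
have nD := near_in_finite B_finite near_D.
have nlen := near_in_finite B_finite near_len.
have ndist := near_in_finite (finite_setX B_finite B_finite)
  (fun p (Bp : (B `*` B) p) => near_dist Bp.1 Bp.2).
have [N [oN Nu HN]] := near_in_and near_U
  (near_in_and nD (near_in_and nlen (near_in_and ndist near_covered))).
exists N; split => // v Nv Gv; have [? [? [? [dv ?]]]] := HN v Nv Gv.
by split => // x y Bx By; exact: (dv (x, y)).
Qed.

Section Chart.
Variable N : set G.
Hypothesis N_open : open N.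
Hypothesis N_adapted : forall v, N v -> G0 v -> adapted v.

Local Notation V := (N `&` G0).

Definition chart (p : G * G) := lsec p.1 p.2.

Lemma V_D x v : V v -> B x -> D x v.
Proof. by move=> [Nv Gv]; have [_ h _ _ _] := N_adapted Nv Gv; apply: h. Qed.

Lemma chart_s x v : V v -> B x -> s (chart (x, v)) = v.
Proof. by move=> Vv Bx; apply/lsec_s/V_D. Qed.

Lemma chart_unit v : V v -> chart (u, v) = v.
Proof.
move=> [Nv Gv]; have [Uv _ _ _ _] := N_adapted Nv Gv.
by rewrite /chart /lsec /= -{1}(unit_r HG Gv) g_retr // (unit_i HG Gv).
Qed.

Lemma chart_inj_fibre x x' v : V v -> B x -> B x' ->
  chart (x, v) = chart (x', v) -> x = x'.
Proof.
move=> Vv Bx Bx' e; have [Nv Gv] := Vv.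
have [_ _ _ stable _] := N_adapted Nv Gv.
have := stable x x' Bx Bx' (V_D Vv Bx) (V_D Vv Bx'); case: eqP => // nxx'.
rewrite /chart /= in e; rewrite -e (l_mi HG Hl) subr0 ger0_norm ?(l_ge0 Hl) //.
by rewrite lt_min ltxx andbF.
Qed.

Lemma chart_inj p q : (B `*` V) p -> (B `*` V) q -> chart p = chart q -> p = q.
Proof.
move: p q => [x v] [x' v'] [/= Bx Vv] [/= Bx' Vv'] e.
have ev : v = v' by rewrite -(chart_s Vv Bx) e chart_s.
by subst v'; rewrite (chart_inj_fibre Vv Bx Bx' e).
Qed.

Lemma chart_rangeE :
  chart @` (B `*` V) = \bigcup_(x in B) (i @^-1` U x `&` s @^-1` N).
Proof.
apply/seteqP; split.
  move=> w [[x v] [/= Bx Vv] <-]; exists x => //; split; first exact/lsec_U/V_D.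
  by rewrite /= (chart_s Vv Bx); case: Vv.
move=> w [x Bx [/= Uw Nw]]; have [Dw e] := lsec_onto Uw.
by exists (x, s w) => //; split => //; split => //; exact: (sG0 HG).
Qed.

Lemma chart_range_open : open (chart @` (B `*` V)).
Proof.
rewrite chart_rangeE; apply: bigcup_open => x Bx.
by apply: openI; exact: open_preimage.
Qed.

Lemma chart_label_unique x v x' : V v -> B x -> B x' ->
  U x' (i (chart (x, v))) -> x' = x.
Proof.
move=> Vv Bx Bx' Ux'; have [_ e] := lsec_onto Ux'.
rewrite (chart_s Vv Bx) in e; exact: chart_inj_fibre Vv Bx' Bx e.
Qed.

Definition chart_label (w : G) : G :=
  match pselect (exists x, B x /\ U x (i w)) with
  | left H => projT1 (cid H) | right _ => u end.

Definition chart_inv (w : G) : G * G := (chart_label w, s w).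

Lemma chart_labelE x v : V v -> B x -> chart_label (chart (x, v)) = x.
Proof.
move=> Vv Bx; rewrite /chart_label; case: pselect => [H|nH]; last first.
  by exfalso; apply: nH; exists x; split => //; exact/lsec_U/V_D.
by case: (cid H) => x' [Bx' Ux'] /=; exact: chart_label_unique Ux'.
Qed.

Lemma chart_invK p : (B `*` V) p -> chart_inv (chart p) = p.
Proof. by case: p => x v [/= Bx Vv]; rewrite /chart_inv chart_labelE ?chart_s. Qed.

Lemma chartK w : (chart @` (B `*` V)) w -> chart (chart_inv w) = w.
Proof. by move=> [p Bp <-]; rewrite chart_invK. Qed.

(* Near (x, v) the chart only sees the section through x, since the fibre of
   x meets U x^-1 in x alone. *)
Lemma chart_continuous : {within B `*` V, continuous chart}.
Proof.
apply/within_continuousP => -[x v] [/= Bx Vv] Q oQ Qx.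
have [Nv [oNv Nvv NvQ]] := lsec_cont (V_D Vv Bx) oQ Qx.
exists ((i @^-1` U x) `*` Nv); split => //.
- by apply: open_setX => //; exact: open_preimage.
- by split => //=; exact: U_inv.
move=> [x' v'] [/= Ux' Nv'] [/= Bx' Vv'].
have -> : x' = x by apply: fibre_discrete; rewrite ?B_s.
by apply: NvQ => //; exact: V_D.
Qed.

(* Near w = f (x, v) in the range the label is constantly x, and the second
   coordinate is the continuous map s. *)
Lemma chart_inv_continuous : {within chart @` (B `*` V), continuous chart_inv}.
Proof.
apply/within_continuousP => w [[x v] [/= Bx Vv] ew] Q oQ Qw.
rewrite -ew chart_invK // in Qw.
have [Q1 [Q2 [oQ1 oQ2 Q1x Q2v Q12]]] := open_prod_box oQ Qw.
exists (i @^-1` U x `&` s @^-1` Q2); split.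
- by apply: openI; exact: open_preimage.
- by rewrite -ew /= chart_s //; split => //; exact/lsec_U/V_D.
move=> w' [/= Uw' Qw'] [[x'' v''] [/= Bx'' Vv''] ew'].
have ex : x = x'' by apply: (chart_label_unique Vv'' Bx'' Bx); rewrite ew'.
by subst x'' w'; rewrite /chart_inv chart_labelE //; apply: Q12.
Qed.

Lemma chart_homeo : homeo_on (B `*` V) (chart @` (B `*` V)) chart.
Proof.
split; [split | exact: chart_continuous | exists chart_inv; split].
- by move=> p Bp; exists p.
- by move=> p q /set_mem Bp /set_mem Bq; apply: chart_inj.
- by move=> w.
- split.
  + by move=> w [p Bp <-]; rewrite chart_invK.
  + by move=> w w' /set_mem Ww /set_mem Ww' e; rewrite -(chartK Ww) -(chartK Ww') e.
  + by move=> p Bp; exists (chart p); [exists p | rewrite chart_invK].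
- exact: chart_invK.
- exact: chartK.
- exact: chart_inv_continuous.
Qed.

Lemma chart_fibre v : V v -> chart @` (B `*` [set v]) = cball_rho s m i l v S.
Proof.
move=> Vv; have [Nv Gv] := Vv; have [_ _ len _ cov] := N_adapted Nv Gv.
apply/seteqP; split.
  move=> w [[x v'] [/= Bx ->] <-]; apply/(cball_unit HG Hl _ _ Gv).
  by split; [exact: chart_s | apply: len => //; exact: V_D].
move=> y /(cball_unit HG Hl _ _ Gv) [sy ly]; case: (pselect (G0 y)) => Gy.
  have -> : y = v by rewrite -sy (unit_s HG Gy).
  by exists (u, v); [split => //; exact: B_u | exact: chart_unit].
have [x [Bx Ux]] := cov y sy ly Gy; have [_ e] := lsec_onto Ux.
by exists (x, v) => //; rewrite /chart /= -sy.
Qed.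

Lemma chart_distortion x y v : B x -> B y -> V v ->
  (`| rho s m i l x y - rho s m i l (chart (x, v)) (chart (y, v)) | < eps%:E)%E.
Proof.
move=> Bx By Vv; have [Nv Gv] := Vv; have [_ _ _ stable _] := N_adapted Nv Gv.
rewrite rho_same; last by rewrite !B_s.
rewrite rho_same; last by rewrite !chart_s.
rewrite -EFinB abse_EFin lte_fin.
apply: lt_le_trans (stable x y Bx By (V_D Vv Bx) (V_D Vv By)) _.
by case: eqP => _ //; rewrite ge_min lexx.
Qed.
End Chart.

Lemma local_product : exists (V W : set G) (f : G * G -> G),
  [/\ (V `<=` G0 /\ rel_open G0 V /\ V u) /\ open W,
      homeo_on (B `*` V) W f /\ (forall v, V v -> f (u, v) = v) /\
        (forall x, B x -> f (x, u) = x),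
      (forall v, V v -> f @` (B `*` [set v]) = cball_rho s m i l v S) &
      (forall x y v, B x -> B y -> V v ->
         (`| rho s m i l x y - rho s m i l (f (x, v)) (f (y, v)) | < eps%:E)%E)].
Proof.
have [N [oN Nu N_adapted]] := near_adapted.
exists (N `&` G0), (chart @` (B `*` (N `&` G0))), chart; split.
- by split; [split; [move=> v [] | split; [exists N | split]] |
    exact: chart_range_open].
- split; first exact: chart_homeo.
  by split; [exact: chart_unit | move=> x; exact: lsec_B].
- exact: chart_fibre.
- exact: chart_distortion.
Qed.
End LocalProductStructure.

Lemma etale_local_sections (G : topologicalType) (G0 : set G) (r i : G -> G) :
  is_etale G0 r ->
  exists (U : G -> set G) (g : G -> G -> G),
    [/\ (forall x, open (U x) /\ U x (i x)),
        (forall x v, (r @` U x) v -> U x (g x v) /\ r (g x v) = v),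
        (forall x y, U x y -> g x (r y) = y),
        (forall x, {within r @` U x, continuous g x}) &
        (forall x, exists2 Q, open Q & r @` U x = Q `&` G0)].
Proof.
move=> Het; have [U hU] := choice (fun x => Het (i x)).
have hg x : exists g, [/\ set_bij (r @` U x) (U x) g,
    forall y, U x y -> g (r y) = y, forall v, (r @` U x) v -> r (g v) = v
    & {within r @` U x, continuous g}].
  by have [_ _ _ [_ _ [g hg]]] := hU x; exists g.
have [g hgf] := choice hg; exists U, g; split.
- by move=> x; case: (hU x).
- by move=> x v Dv; case: (hgf x) => [[gU _ _] _ rg _]; split; [apply: gU | apply: rg].
- by move=> x; case: (hgf x).
- by move=> x; case: (hgf x).
- by move=> x; case: (hU x) => _ _ [Q [oQ ->]] _; exists Q.
Qed.

Lemma etale_range_continuous (G : topologicalType) (G0 : set G) (r : G -> G) :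
  is_etale G0 r -> continuous r.
Proof.
move=> Het x; have [U [oU Ux _ [_ rU _]]] := Het x.
have : {in U, continuous r} by rewrite -continuous_open_subspace.
by apply; apply/mem_set.
Qed.

Lemma etale_source_continuous (G : topologicalType) (G0 : set G)
    (s r : G -> G) (m : G -> G -> G) (i : G -> G) :
  is_groupoid G0 s r m i -> continuous i -> is_etale G0 r -> continuous s.
Proof.
move=> HG Hi Het; have -> : s = r \o i by apply: funext => y; rewrite /= (ri HG).
by move=> x; apply: continuous_comp; [exact: Hi | exact: etale_range_continuous].
Qed.

Unset Implicit Arguments. Set Strict Implicit.

Theorem mainTheorem15 (R : realType) (G : topologicalType) (G0 : set G)
    (s r : G -> G) (m : G -> G -> G) (i : G -> G) (l : G -> R)
    (u : G) (Rad eps : R) :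
  is_topological_groupoid G0 s r m i ->
  is_etale G0 r ->
  hausdorff_space G ->
  locally_compact [set: G] ->
  sigma_compact G ->
  is_length_function G0 s r m i l ->
  continuous l ->
  length_proper G0 l ->
  length_controlled l ->
  G0 u -> 0 < Rad -> 0 < eps ->
  exists (S : R) (V W : set G) (f : G * G -> G),
    [/\ Rad <= S < Rad + eps,
        (V `<=` G0 /\ rel_open G0 V /\ V u) /\ open W,
        homeo_on (cball_rho s m i l u S `*` V) W f /\
        (forall v, V v -> f (u, v) = v) /\
        (forall x, cball_rho s m i l u S x -> f (x, u) = x),
        (forall v, V v ->
           f @` (cball_rho s m i l u S `*` [set v]) = cball_rho s m i l v S) &
        (forall x y v, cball_rho s m i l u S x -> cball_rho s m i l u S y -> V v ->
           (`| rho s m i l x y - rho s m i l (f (x, v)) (f (y, v)) | < eps%:E)%E)].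
Proof.
move=> [HG Hm Hi] Het Hhaus _ _ Hl Hlc Hprop _ Hu Rad_gt0 eps_gt0.
have Hs := etale_source_continuous HG Hi Het.
have [U [g [U_nbhd g_sect g_retr g_cont D_open]]] := etale_local_sections i Het.
have U_open x : open (U x) by case: (U_nbhd x).
have U_inv x : U x (i x) by case: (U_nbhd x).
have [S [/andP [RS SR] S_avoids]] :=
  good_radius HG Hi U_open U_inv g_retr Hs Hhaus Hlc Hprop u Rad eps_gt0.
have S_ge0 : 0 <= S by apply: le_trans RS; exact: ltW.
have [V [W [f [HV Hf Hfibre Hdist]]]] := local_product HG Hi U_open U_inv
  g_sect g_retr g_cont D_open Hs Hhaus Hl Hlc Hprop Hm Hu eps_gt0 S_ge0 S_avoids.
by exists S, V, W, f; split => //; rewrite RS SR.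
Qed.
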